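(* Let $\mathcal{C}$, $\mathcal{X}$, $\mathcal{I}$ be three similar configurations of $d$ doors, where $\mathcal{X}$ is cascading and $\mathcal{I}$ is independent. Then for every knock sequence $\pi$, $$\mathbb{T}_{\mathcal{I}}(\pi)\le \mathbb{T}_{\mathcal{C}}(\pi)\le \mathbb{T}_{\mathcal{X}}(\pi),$$ and consequently $\mathbb{T}_{\mathcal{I}}\le \mathbb{T}_{\mathcal{C}}\le \mathbb{T}_{\mathcal{X}}$.
   Context: Dependent doors model. Fix an integer $d\ge 2$ and doors $1,\dots,d$, all initially closed; once a door opens it stays open forever. A configuration $\mathcal{C}$ specifies for each door $i$ a function $\phi_i^{\mathcal{C}}$ mapping every finite nonempty sequence $(X_1,\dots,X_n)$ of subsets of $\{1,\dots,i-1\}$ to $[0,1]$: $\phi_i^{\mathcal{C}}(X_1,\dots,X_n)$ is the probability that door $i$ has opened during $n$ knocks on it, where $X_j$ is the set of open doors among $\{1,\dots,i-1\}$ at the time of the $j$-th knock on door $i$ (so a closed door $i$ opens at its $n$-th knock with conditional probability $(\phi_i(X_1..X_n)-\phi_i(X_1..X_{n-1}))/(1-\phi_i(X_1..X_{n-1}))$, with $\phi_i$ of the empty sequence equal to $0$). Configurations are assumed monotone ($\phi_i(X')\le\phi_i(X)$ whenever $X'$ is a, not necessarily consecutive, subsequence of $X$) and positively correlated ($\phi_i(X'_1,\dots,X'_n)\le\phi_i(X_1,\dots,X_n)$ whenever $X'_j\subseteq X_j$ for all $j$). The fundamental distribution of door $i$ is $p_i(n)=1-\phi_i(\{1,\dots,i-1\}^n)$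 ($p_i(0)=1$), and $E_i=\sum_{n\ge0}p_i(n)$ is assumed finite. Two configurations are similar if for every $i$ door $i$ has the same fundamental distribution in both. A configuration is independent if $\phi_i(X_1,\dots,X_k)=\phi_i(\{1,\dots,i-1\}^k)$ for all inputs, and cascading if $\phi_i(X_1,\dots,X_k)=\phi_i(\{1,\dots,i-1\}^t)$ where $t$ is the number of $j$ with $X_j=\{1,\dots,i-1\}$. A knock sequence $\pi$ is an infinite sequence of door indices, executed in order without any feedback; $\mathbb{T}_{\mathcal{C}}(\pi)$ is the expected number of knocks until all $d$ doors are open, and $\mathbb{T}_{\mathcal{C}}=\inf_\pi \mathbb{T}_{\mathcal{C}}(\pi)$. *)

From HB Require Import structures.
From mathcomp Require Import all_boot all_order all_algebra.
From mathcomp Require Import boolp classical_sets reals ereal sequences.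
Set Implicit Arguments. Unset Strict Implicit. Unset Printing Implicit Defensive.
Import Order.TTheory GRing.Theory Num.Theory.
Local Open Scope ring_scope.

(* Doors 1..d are represented by 'I_d (door i <-> ordinal i-1), so the doors
   with smaller index than door i are [set j | j < i]. *)
Definition lower (d : nat) (i : 'I_d) : {set 'I_d} := [set j : 'I_d | (j < i)%N].

(* A configuration: phi i (X_1..X_n) for door i.  Only sequences of subsets of
   [lower i] are meaningful inputs; phi i [::] is the probability after 0 knocks. *)
Definition config (R : realType) (d : nat) := 'I_d -> seq {set 'I_d} -> R.

Definition valid_input d (i : 'I_d) (s : seq {set 'I_d}) : bool :=
  all (fun X : {set 'I_d} => X \subset lower i) s.

Definition fullseq d (i : 'I_d) (n : nat) : seq {set 'I_d} := nseq n (lower i).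

Section Config.
Variables (R : realType) (d : nat).
Implicit Types (C : config R d) (i : 'I_d).

Definition is_probability_config C : Prop :=
  forall i, C i [::] = 0 /\
    forall s, valid_input i s -> 0 <= C i s <= 1.

Definition monotone_config C : Prop :=
  forall i s s', valid_input i s -> subseq s' s -> C i s' <= C i s.

Definition poscorr_config C : Prop :=
  forall i s s', valid_input i s -> all2 (fun a b : {set 'I_d} => a \subset b) s' s ->
    C i s' <= C i s.

Definition fund C i (n : nat) : R := 1 - C i (fullseq i n).

Definition finite_expectations C : Prop :=
  forall i, (\sum_(0 <= n <oo) (fund C i n)%:E < +oo)%E.

Definition good_config C : Prop :=
  [/\ is_probability_config C, monotone_config C, poscorr_config C
    & finite_expectations C].

Definition similar_config C1 C2 : Prop := forall i n, fund C1 i n = fund C2 i n.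

Definition independent C : Prop :=
  forall i s, valid_input i s -> C i s = C i (fullseq i (size s)).

Definition cascading C : Prop :=
  forall i s, valid_input i s ->
    C i s = C i (fullseq i (count (fun X => X == lower i) s)).

(* An outcome over horizon t records for each door the (0-based) index u < t of
   the knock at which it opened, or None if it is still closed after t knocks. *)
Definition outcome (t : nat) := {ffun 'I_d -> option 'I_t}.

Definition opened_before t (o : outcome t) (j : 'I_d) (s : nat) : bool :=
  if o j is Some u then (u < s)%N else false.

Definition open_lower t (o : outcome t) i (s : nat) : {set 'I_d} :=
  [set j : 'I_d | (j < i)%N && opened_before o j s].

(* X-sequence seen by door i during the knocks with index < b *)
Definition Xseq (pi : nat -> 'I_d) t (o : outcome t) i (b : nat) : seq {set 'I_d} :=
  [seq open_lower o i s | s <- [seq s <- iota 0 b | pi s == i]].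

(* probability contribution of door i (chain rule, telescoped) *)
Definition door_weight C (pi : nat -> 'I_d) t (o : outcome t) i : R :=
  match o i with
  | Some u => if pi u == i then C i (Xseq pi o i u.+1) - C i (Xseq pi o i u)
              else 0
  | None => 1 - C i (Xseq pi o i t)
  end.

Definition outcome_prob C pi t (o : outcome t) : R :=
  \prod_(i : 'I_d) door_weight C pi o i.

Definition P_not_done C (pi : nat -> 'I_d) (t : nat) : R :=
  \sum_(o : outcome t | [exists i, o i == None]) outcome_prob C pi o.

(* expected number of knocks until all doors are open: E[tau] = sum_t P(tau > t) *)
Definition ET C (pi : nat -> 'I_d) : \bar R :=
  (\sum_(0 <= t <oo) (P_not_done C pi t)%:E)%E.

Definition Topt C : \bar R := ereal_inf (range (ET C)).

End Config.

From HB Require Import structures.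
From mathcomp Require Import all_boot all_order all_algebra.
From mathcomp Require Import boolp classical_sets reals ereal sequences.
From mathcomp Require Import ring.
Import Order.TTheory GRing.Theory Num.Theory.
Local Open Scope ring_scope.
Set Implicit Arguments. Unset Strict Implicit. Unset Printing Implicit Defensive.

(* Since E[tau] = sum_t P(tau > t), it suffices to compare, for each horizon,
   the probabilities q(k, s) that doors 1..k are all open before knock s; we
   do so by induction on k.  Given the history of the lower doors, door k+1 is
   open before knock s with probability phi_{k+1}(X_1, ..., X_n), where n is
   the number of knocks on it before s.  Positive correlation bounds this by
   phi_{k+1}(full^n), which is what the independent configuration uses, so
   q_C(k+1, s) <= phi(n) q_C(k, s) <= phi(n) q_I(k, s) = q_I(k+1, s).
   Monotonicity bounds it from below by phi_{k+1}(full^m), with m the number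
   of knocks after all lower doors are open, which is what the cascading
   configuration uses; summation by parts over the time at which the lower
   doors are all open turns this term into a nonnegative combination of the
   q(k, r), r <= s, to which the induction hypothesis applies. *)

Section Outcomes.
Variables (R : realType) (d : nat) (pi : nat -> 'I_d) (t : nat).
Implicit Types (C : config R d) (o : outcome d t) (i j : 'I_d).

Definition set_door o i (v : option 'I_t) : outcome d t :=
  [ffun j => if j == i then v else o j].

Definition closed_from (k : nat) o := [forall j : 'I_d, (k <= j)%N ==> (o j == None)].

Definition open_below (k s : nat) o := [forall j : 'I_d, (j < k)%N ==> opened_before o j s].

(* The weight of door i only depends on the doors up to i, so summing
   [prefix_weight C k] over the outcomes that pin the doors from k on to [None]
   gives the joint law of the doors below k. *)
Definition prefix_weight C (k : nat) o := \prod_(i : 'I_d | (i < k)%N) door_weight C pi o i.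

Definition prob_open_below C (k s : nat) :=
  \sum_(o | closed_from k o) prefix_weight C k o * (open_below k s o)%:R.

Lemma open_lower_eq o1 o2 i s :
  (forall j, (j < i)%N -> o1 j = o2 j) -> open_lower o1 i s = open_lower o2 i s.
Proof.
move=> eq12; apply/setP=> j; rewrite !inE.
by case: ltnP => //= /eq12; rewrite /opened_before => ->.
Qed.

Lemma Xseq_eq o1 o2 i b :
  (forall j, (j < i)%N -> o1 j = o2 j) -> Xseq pi o1 i b = Xseq pi o2 i b.
Proof. by move=> eq12; apply: eq_map => s; apply: open_lower_eq. Qed.

Lemma door_weight_eq C o1 o2 i :
  (forall j, (j <= i)%N -> o1 j = o2 j) ->
  door_weight C pi o1 i = door_weight C pi o2 i.
Proof.
move=> eq12; have eq12' j : (j < i)%N -> o1 j = o2 j by move/ltnW/eq12.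
rewrite /door_weight eq12 //; case: (o2 i) => [u|]; by rewrite !(Xseq_eq _ eq12').
Qed.

Lemma set_door_at o i v : set_door o i v i = v.
Proof. by rewrite ffunE eqxx. Qed.

Lemma set_door_ne o i v j : j != i -> set_door o i v j = o j.
Proof. by rewrite ffunE => /negbTE ->. Qed.

Lemma ltn_ord_neq i j : (j < i)%N -> j != i.
Proof. by apply: contraTneq => ->; rewrite ltnn. Qed.

Lemma Xseq_set_door o i v b : Xseq pi (set_door o i v) i b = Xseq pi o i b.
Proof. by apply: Xseq_eq => j /ltn_ord_neq; apply: set_door_ne. Qed.

Lemma XseqS o i s :
  Xseq pi o i s.+1 = Xseq pi o i s ++ (if pi s == i then [:: open_lower o i s] else [::]).
Proof. by rewrite /Xseq -addn1 iotaD filter_cat map_cat /=; case: (pi s == i). Qed.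

Lemma valid_Xseq o i b : valid_input i (Xseq pi o i b).
Proof.
by apply/allP => _ /mapP[s _ ->]; apply/fintype.subsetP => j; rewrite !inE => /andP[].
Qed.

Lemma open_lower_full o i s : (open_lower o i s == lower i) = open_below i s o.
Proof.
apply/eqP/forallP => [full j|open]; last first.
  by apply/setP => j; rewrite !inE; case: ltnP => //= /(implyP (open j)).
apply/implyP => lt_ji; have : j \in lower i by rewrite inE.
by rewrite -full inE => /andP[].
Qed.

Lemma count_Xseq o i s :
  count (fun X => X == lower i) (Xseq pi o i s)
  = count (fun r => open_below i r o) [seq r <- iota 0 s | pi r == i].
Proof. by rewrite count_map; apply: eq_count => r; rewrite /= open_lower_full. Qed.

Lemma open_below_step (k : nat) s o : open_below k s o -> open_below k s.+1 o.
Proof.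
move=> /forallP open; apply/forallP => j; apply/implyP => /(implyP (open j)).
by rewrite /opened_before; case: (o j) => // u /ltnW.
Qed.

Lemma open_belowS i s o v :
  open_below i.+1 s (set_door o i v)
  = open_below i s o && opened_before (set_door o i v) i s.
Proof.
have set_ne j : (j < i)%N -> opened_before (set_door o i v) j s = opened_before o j s.
  by move/ltn_ord_neq => ji; rewrite /opened_before set_door_ne.
apply/forallP/andP => [open|[/forallP open open_i] j].
  split; last by have /implyP := open i; apply.
  apply/forallP => j; apply/implyP => lt_ji.
  by rewrite -set_ne //; apply: (implyP (open j)); apply: ltnW.
apply/implyP; rewrite ltnS leq_eqVlt => /orP[/eqP/val_inj -> //|lt_ji].
by rewrite set_ne //; apply: (implyP (open j)).
Qed.

Lemma prefix_weightS C i o v :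
  prefix_weight C i.+1 (set_door o i v)
  = prefix_weight C i o * door_weight C pi (set_door o i v) i.
Proof.
rewrite /prefix_weight (bigD1 i) //= mulrC; congr (_ * _).
apply: eq_big => [j|j /andP[lt_ji ji]].
  case: (eqVneq j i) => [->|ji]; first by rewrite ltnn andbF.
  by rewrite andbT ltnS leq_eqVlt (negbTE (ji : (j : nat) != i)).
have {lt_ji} lt_ji : (j < i)%N by rewrite ltn_neqAle (ji : (j : nat) != i) -ltnS.
apply: door_weight_eq => l le_lj.
exact/set_door_ne/ltn_ord_neq/(leq_ltn_trans le_lj lt_ji).
Qed.

Lemma sum_option (F : option 'I_t -> R) :
  \sum_v F v = F None + \sum_(u : 'I_t) F (Some u).
Proof.
rewrite (bigD1 None) //=; congr (_ + _).
by rewrite (reindex_omap Some id) //=; [apply: eq_bigl => u; rewrite eqxx | case].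
Qed.

Lemma sum_closed_fromS i (F : outcome d t -> R) :
  \sum_(o | closed_from i.+1 o) F o
  = \sum_(o | closed_from i o) \sum_v F (set_door o i v).
Proof.
rewrite pair_big_dep /=.
rewrite (reindex_onto (fun p : outcome d t * option 'I_t => set_door p.1 i p.2)
   (fun o => (set_door o i None, o i))) /=; last first.
  by move=> o _; apply/ffunP => j; rewrite !ffunE; case: eqP => // ->.
apply: eq_bigl => -[o v] /=; rewrite xpair_eqE set_door_at eqxx !andbT.
apply/idP/idP => [/andP[/forallP closed /eqP <-]|/forallP closed].
  apply/forallP => j; apply/implyP => le_ij; rewrite ffunE.
  case: (eqVneq j i) => // ji; apply: (implyP (closed j)).
  by rewrite ltn_neqAle eq_sym (ji : (j : nat) != i) le_ij.
apply/andP; split.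
  apply/forallP => j; apply/implyP => lt_ij.
  rewrite set_door_ne; last by rewrite eq_sym; apply: ltn_ord_neq.
  by apply: (implyP (closed j)); apply: ltnW.
apply/eqP/ffunP => j; rewrite !ffunE; case: (eqVneq j i) => [->|//].
by move/implyP: (closed i) => /(_ (leqnn i))/eqP ->.
Qed.

Lemma sum_prefix_weightS C i (F : outcome d t -> R) :
  \sum_(o | closed_from i.+1 o) prefix_weight C i.+1 o * F o
  = \sum_(o | closed_from i o) prefix_weight C i o
      * \sum_v door_weight C pi (set_door o i v) i * F (set_door o i v).
Proof.
rewrite sum_closed_fromS; apply: eq_bigr => o _; rewrite big_distrr.
by apply: eq_bigr => v _; rewrite prefix_weightS -mulrA.
Qed.

Definition no_door_open : outcome d t := [ffun => None].

Lemma sum_closed_from0 (F : outcome d t -> R) :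
  \sum_(o | closed_from 0 o) F o = F no_door_open.
Proof.
apply: big_pred1 => o /=; apply/forallP/eqP => [closed|->].
  by apply/ffunP => j; rewrite ffunE; apply/eqP/(implyP (closed j)).
by move=> j; rewrite ffunE.
Qed.

Lemma prefix_weight0 C o : prefix_weight C 0 o = 1.
Proof. by rewrite /prefix_weight big_pred0. Qed.

Lemma prob_open_below0 C s : prob_open_below C 0 s = 1.
Proof.
rewrite /prob_open_below sum_closed_from0 prefix_weight0 mul1r.
by have -> : open_below 0 s no_door_open by apply/forallP.
Qed.

Section ProbabilityConfig.
Variable C : config R d.
Hypothesis C_nil : forall i, C i [::] = 0.

(* The weights of the knocks on door i before s telescope. *)
Lemma sum_door_weight_opened i o s : (s <= t)%N ->
  \sum_v door_weight C pi (set_door o i v) i * (opened_before (set_door o i v) i s)%:R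
  = C i (Xseq pi o i s).
Proof.
move=> le_st; pose g k := C i (Xseq pi o i k).
have gS u : (if pi u == i then g u.+1 - g u else 0) = g u.+1 - g u.
  by rewrite /g XseqS; case: eqP; rewrite ?cats0 ?subrr.
have := @telescope_sumr _ 0 s g (leq0n s).
rewrite (big_nat_widen 0 s t) // big_mkord big_mkcond /= /g /Xseq /= C_nil subr0 => <-.
rewrite sum_option /opened_before set_door_at mulr0 add0r; apply: eq_bigr => u _.
rewrite set_door_at /door_weight set_door_at !Xseq_set_door gS.
by case: (u < s)%N; rewrite ?mulr1 ?mulr0.
Qed.

Lemma sum_door_weight i o : \sum_v door_weight C pi (set_door o i v) i = 1.
Proof.
have := sum_door_weight_opened i o (leqnn t).
rewrite !sum_option /opened_before set_door_at mulr0 add0r.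
under eq_bigr do rewrite set_door_at ltn_ord mulr1.
by rewrite /door_weight set_door_at Xseq_set_door => ->; rewrite subrK.
Qed.

Lemma prob_open_belowS i s : (s <= t)%N ->
  prob_open_below C i.+1 s
  = \sum_(o | closed_from i o)
      prefix_weight C i o * (open_below i s o)%:R * C i (Xseq pi o i s).
Proof.
move=> le_st; rewrite /prob_open_below sum_prefix_weightS.
apply: eq_bigr => o _; rewrite -sum_door_weight_opened // -mulrA !mulr_sumr.
by apply: eq_bigr => v _; rewrite open_belowS -mulnb natrM; ring.
Qed.

Lemma sum_prefix_weight k : (k <= d)%N ->
  \sum_(o | closed_from k o) prefix_weight C k o = 1.
Proof.
elim: k => [_|k IH lt_kd]; first by rewrite sum_closed_from0 prefix_weight0.
rewrite -[RHS](IH (ltnW lt_kd)).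
have := sum_prefix_weightS C (Ordinal lt_kd) (fun => 1); rewrite /=.
under eq_bigr do rewrite mulr1.
move=> ->; apply: eq_bigr => o _.
by under eq_bigr do rewrite mulr1; rewrite sum_door_weight mulr1.
Qed.

Lemma P_not_done_eq : P_not_done C pi t = 1 - prob_open_below C d t.
Proof.
have closed_d o : closed_from d o.
  by apply/forallP => j; rewrite leqNgt ltn_ord.
have weight_d o : prefix_weight C d o = outcome_prob C pi o.
  by apply: eq_bigl => i; rewrite ltn_ord.
have open_d o : open_below d t o = ~~ [exists i, o i == None].
  rewrite negb_exists; apply: eq_forallb => j; rewrite ltn_ord /opened_before.
  by case: (o j) => [u|] //=; rewrite ltn_ord.
rewrite -(sum_prefix_weight (leqnn d)) /prob_open_below -sumrB /P_not_done big_mkcond.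
rewrite (eq_bigl _ _ closed_d); apply: eq_bigr => o _.
by rewrite weight_d open_d; case: [exists i, o i == None]; rewrite ?mulr0 ?mulr1 ?subr0 ?subrr.
Qed.

End ProbabilityConfig.

Lemma door_weight_ge0 C o i : is_probability_config C -> monotone_config C ->
  0 <= door_weight C pi o i.
Proof.
move=> probC monoC; rewrite /door_weight; case: (o i) => [u|].
  case: eqP => _ //; rewrite subr_ge0; apply: monoC; first exact: valid_Xseq.
  by rewrite XseqS -{1}(cats0 (Xseq pi o i u)) subseq_cat2l sub0seq.
by rewrite subr_ge0; case: (probC i) => _ /(_ _ (valid_Xseq o i t)) /andP[].
Qed.

Lemma prefix_weight_ge0 C k o : is_probability_config C -> monotone_config C ->
  0 <= prefix_weight C k o.
Proof. by move=> probC monoC; apply: prodr_ge0 => i _; apply: door_weight_ge0. Qed.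

Lemma P_not_done_ge0 C : is_probability_config C -> monotone_config C ->
  0 <= P_not_done C pi t.
Proof.
by move=> probC monoC; apply: sumr_ge0 => o _; apply: prodr_ge0 => i _; apply: door_weight_ge0.
Qed.

End Outcomes.

Section SummationByParts.
Variable R : pzRingType.

Definition tail_value (P : pred nat) (f : nat -> R) (s r : nat) : R :=
  if (r <= s)%N then f (count P (iota r (s - r))) else 0.

Lemma threshold_count_by_parts m P f s : (m <= s)%N ->
  f (count (leq m) [seq r <- iota 0 s | P r])
  = \sum_(0 <= r < s.+1) (m <= r)%:R * (tail_value P f s r - tail_value P f s r.+1).
Proof.
move=> le_ms; rewrite count_filter -{1}(subnKC le_ms) iotaD count_cat add0n.
rewrite (@eq_in_count _ _ pred0 (iota 0 m)) ?count_pred0 ?add0n; last first.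
  by move=> r; rewrite mem_iota /= => lt_rm; rewrite leqNgt lt_rm.
rewrite (eq_in_count (a2 := P)); last first.
  by move=> r; rewrite mem_iota /= => /andP[-> _].
rewrite (@big_cat_nat _ _ _ m) ?leqW //= big_nat_cond big1 ?add0r; last first.
  by move=> r /andP[/andP[_ lt_rm] _]; rewrite leqNgt lt_rm mul0r.
rewrite (@telescope_sumr_eq _ _ _ (fun r => - tail_value P f s r)) ?leqW //.
  by rewrite /tail_value ltnn le_ms opprK oppr0 add0r.
by move=> r /andP[le_mr _]; rewrite le_mr mul1r opprK addrC.
Qed.

(* Summation by parts over the first time [m] at which the monotone event [A]
   holds: the instances of [P] counted by [A] are exactly those in [[m, s)]. *)
Lemma monotone_count_by_parts (A : pred nat) P f s : (forall r, A r -> A r.+1) ->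
  (A s)%:R * f (count A [seq r <- iota 0 s | P r])
  = \sum_(0 <= r < s.+1) (A r)%:R * (tail_value P f s r - tail_value P f s r.+1).
Proof.
move=> A_step; have A_mono r r' : (r <= r')%N -> A r -> A r'.
  by move/subnKC <-; elim: (r' - r)%N => [|n IH]; rewrite ?addn0 ?addnS // => /IH/A_step.
case: (boolP (A s)) => [As|notAs]; last first.
  rewrite mul0r big_nat big1 // => r /andP[_ le_rs].
  by case: (boolP (A r)) => [/(A_mono r s le_rs)|_]; rewrite ?(negbTE notAs) ?mul0r.
have [m Am m_min] := ex_minnP (ex_intro A s As).
have A_eq r : A r = (m <= r)%N by apply/idP/idP => [/m_min|/A_mono]; last exact.
rewrite mul1r (eq_count A_eq) (threshold_count_by_parts _ _ (m_min s As)).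
by apply: eq_bigr => r _; rewrite A_eq.
Qed.

End SummationByParts.

Lemma tail_valueS_le (R : numDomainType) P (f : nat -> R) s r :
  {homo f : m n / (m <= n)%N >-> m <= n} -> (forall n, 0 <= f n) ->
  tail_value P f s r.+1 <= tail_value P f s r.
Proof.
move=> f_mono f_ge0; rewrite /tail_value; case: (leqP r.+1 s) => [lt_rs|_].
  by rewrite ltnW // f_mono // -(subnSK lt_rs) /= leq_addl.
by case: (r <= s)%N.
Qed.

Section FundamentalSequence.
Variables (R : realType) (d : nat).
Implicit Types (C : config R d) (i : 'I_d).

Lemma valid_fullseq i n : valid_input i (fullseq i n).
Proof. by rewrite /valid_input all_nseq subxx orbT. Qed.

Lemma fullseq_ge0 C i n : is_probability_config C -> 0 <= C i (fullseq i n).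
Proof. by case/(_ i) => _ /(_ _ (valid_fullseq i n)) /andP[]. Qed.

Lemma fullseq_mono C i : monotone_config C ->
  {homo (fun n => C i (fullseq i n)) : m n / (m <= n)%N >-> m <= n}.
Proof.
move=> monoC m n /subnKC <-; apply: monoC; first exact: valid_fullseq.
by rewrite /fullseq nseqD -{1}(cats0 (nseq m _)) subseq_cat2l sub0seq.
Qed.

Lemma similar_fullseq C1 C2 i n : similar_config C1 C2 ->
  C1 i (fullseq i n) = C2 i (fullseq i n).
Proof. by move=> sim; apply: (subrI 1); apply: sim. Qed.

Lemma poscorr_le_fullseq C i s : poscorr_config C -> valid_input i s ->
  C i s <= C i (fullseq i (size s)).
Proof.
move=> corrC valid_s; apply: corrC; first exact: valid_fullseq.
by elim: s valid_s => //= X s IH /andP[-> /IH].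
Qed.

(* Deleting the knocks that saw some lower door closed leaves [fullseq]. *)
Lemma monotone_fullseq_count_le C i s : monotone_config C -> valid_input i s ->
  C i (fullseq i (count (fun X => X == lower i) s)) <= C i s.
Proof.
move=> monoC valid_s; apply: monoC => //.
have <- : [seq X <- s | X == lower i] = fullseq i (count (fun X => X == lower i) s).
  by rewrite -size_filter; apply/all_pred1P; rewrite filter_all.
exact: filter_subseq.
Qed.

End FundamentalSequence.

Section Comparison.
Variables (R : realType) (d : nat) (pi : nat -> 'I_d) (t : nat).
Implicit Types (C : config R d) (o : outcome d t).

Lemma prob_open_below_by_parts C (k : nat) (P : pred nat) (f : nat -> R) s :
  \sum_(o : outcome d t | closed_from k o) prefix_weight pi C k o * (open_below k s o)%:R
      * f (count (fun r => open_below k r o) [seq r <- iota 0 s | P r])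
  = \sum_(0 <= r < s.+1)
      prob_open_below pi t C k r * (tail_value P f s r - tail_value P f s r.+1).
Proof.
under eq_bigr => o _.
  rewrite -mulrA (@monotone_count_by_parts _ (fun r => open_below k r o)); last first.
    by move=> r; apply: open_below_step.
  rewrite big_distrr /=.
over.
rewrite exchange_big; apply: eq_bigr => r _.
by rewrite /prob_open_below big_distrl; apply: eq_bigr => o _ /=; rewrite mulrA.
Qed.

Lemma prob_open_below_le_independent (CC CI : config R d) :
  good_config CC -> good_config CI -> similar_config CC CI -> independent CI ->
  forall k s, (k <= d)%N -> (s <= t)%N ->
  prob_open_below pi t CC k s <= prob_open_below pi t CI k s.
Proof.
case=> probC monoC corrC _ [probI _ _ _] simCI indepI.
elim=> [|k IH] s lt_kd le_st; first by rewrite !prob_open_below0.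
pose i := Ordinal lt_kd.
rewrite (prob_open_belowS pi (fun j => (probC j).1) i le_st).
rewrite (prob_open_belowS pi (fun j => (probI j).1) i le_st) /=.
set n := count (fun r => pi r == i) (iota 0 s).
have size_Xseq o : size (Xseq pi o i s) = n by rewrite size_map size_filter.
under [in X in _ <= X]eq_bigr => o _ do rewrite indepI ?valid_Xseq // size_Xseq.
rewrite -big_distrl -(similar_fullseq _ _ simCI) /=.
apply: (@le_trans _ _ (prob_open_below pi t CC k s * CC i (fullseq i n))).
  rewrite /prob_open_below big_distrl; apply: ler_sum => o _ /=.
  apply: ler_wpM2l; first by rewrite mulr_ge0 ?prefix_weight_ge0 ?ler0n.
  by rewrite -(size_Xseq o) poscorr_le_fullseq ?valid_Xseq.
by apply: ler_wpM2r; [exact: fullseq_ge0 | apply: IH; rewrite // ltnW].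
Qed.

Lemma prob_open_below_le_cascading (CC CX : config R d) :
  good_config CC -> good_config CX -> similar_config CC CX -> cascading CX ->
  forall k s, (k <= d)%N -> (s <= t)%N ->
  prob_open_below pi t CX k s <= prob_open_below pi t CC k s.
Proof.
case=> probC monoC _ _ [probX monoX _ _] simCX cascX.
elim=> [|k IH] s lt_kd le_st; first by rewrite !prob_open_below0.
pose i := Ordinal lt_kd; pose P r := pi r == i; pose f n := CX i (fullseq i n).
rewrite (prob_open_belowS pi (fun j => (probX j).1) i le_st).
rewrite (prob_open_belowS pi (fun j => (probC j).1) i le_st) /=.
under eq_bigr => o _ do rewrite cascX ?valid_Xseq // count_Xseq.
rewrite (prob_open_below_by_parts _ _ P f).
apply: (@le_trans _ _ (\sum_(0 <= r < s.+1)
    prob_open_below pi t CC k r * (tail_value P f s r - tail_value P f s r.+1))).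
  apply: ler_sum_nat => r /andP[_ le_rs]; apply: ler_wpM2r.
    by rewrite subr_ge0 tail_valueS_le // => [|n]; [exact: fullseq_mono | exact: fullseq_ge0].
  by apply: IH; [exact: ltnW | exact: leq_trans le_st].
rewrite -prob_open_below_by_parts; apply: ler_sum => o _.
apply: ler_wpM2l; first by rewrite mulr_ge0 ?prefix_weight_ge0 ?ler0n.
rewrite /f /P -(count_Xseq pi o i s) -(similar_fullseq _ _ simCX).
exact/monotone_fullseq_count_le/valid_Xseq.
Qed.

Lemma P_not_done_le_independent (CC CI : config R d) :
  good_config CC -> good_config CI -> similar_config CC CI -> independent CI ->
  P_not_done CI pi t <= P_not_done CC pi t.
Proof.
move=> goodC goodI simCI indepI; have [probC _ _ _] := goodC; have [probI _ _ _] := goodI.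
rewrite !P_not_done_eq ?lerD2l ?lerN2 => [|i|i]; last 2 first.
- exact: (probC i).1.
- exact: (probI i).1.
exact: prob_open_below_le_independent.
Qed.

Lemma P_not_done_le_cascading (CC CX : config R d) :
  good_config CC -> good_config CX -> similar_config CC CX -> cascading CX ->
  P_not_done CC pi t <= P_not_done CX pi t.
Proof.
move=> goodC goodX simCX cascX; have [probC _ _ _] := goodC; have [probX _ _ _] := goodX.
rewrite !P_not_done_eq ?lerD2l ?lerN2 => [|i|i]; last 2 first.
- exact: (probX i).1.
- exact: (probC i).1.
exact: prob_open_below_le_cascading.
Qed.
End Comparison.

Lemma le_ET (R : realType) (d : nat) (C1 C2 : config R d) (pi : nat -> 'I_d) :
  is_probability_config C1 -> monotone_config C1 ->
  (forall t, P_not_done C1 pi t <= P_not_done C2 pi t) -> (ET C1 pi <= ET C2 pi)%E.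
Proof.
move=> probC1 monoC1 le12; apply: lee_nneseries => [t _ _|t _]; rewrite lee_fin //.
exact: P_not_done_ge0.
Qed.

Lemma le_Topt (R : realType) (d : nat) (C1 C2 : config R d) :
  (forall pi, (ET C1 pi <= ET C2 pi)%E) -> (Topt C1 <= Topt C2)%E.
Proof.
move=> le12; apply/ereal_infP => _ [pi _ <-].
by apply: le_trans (le12 pi); apply: ereal_inf_lbound; exists pi.
Qed.

Theorem mainTheorem1 (R : realType) (d : nat) (CC CX CI : config R d) :
  (2 <= d)%N ->
  good_config CC -> good_config CX -> good_config CI ->
  similar_config CC CX -> similar_config CC CI -> similar_config CX CI ->
  cascading CX -> independent CI ->
  (forall pi : nat -> 'I_d,
     (ET CI pi <= ET CC pi)%E /\ (ET CC pi <= ET CX pi)%E) /\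
  ((Topt CI <= Topt CC)%E /\ (Topt CC <= Topt CX)%E).
Proof.
move=> _ goodC goodX goodI simCX simCI _ cascX indepI.
have [probC monoC _ _] := goodC; have [probI monoI _ _] := goodI.
have ET_IC pi : (ET CI pi <= ET CC pi)%E.
  by apply: le_ET => // t; apply: P_not_done_le_independent.
have ET_CX pi : (ET CC pi <= ET CX pi)%E.
  by apply: le_ET => // t; apply: P_not_done_le_cascading.
by split; [move=> pi; split | split; apply: le_Topt].
Qed.
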